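(* (i) For $(t,x)$ with $0\le t<1$ and $|x|>A^*\sqrt{1-t}$, $\mathcal{L}W^*(t,x)=0$. (ii) If $A^*>0$, then for $(t,x)$ with $0\le t<1$ and $0<|x|<A^*\sqrt{1-t}$, $\mathcal{L}W^*(t,x)\le0$. Here $$W^*(t,x)=\begin{cases}(1-t)^{q/2}G_q(|x|/\sqrt{1-t})\,w(A^* ), & |x|>A^*\sqrt{1-t},\\ h(t,x), & |x|\le A^*\sqrt{1-t}.\end{cases}$$
   Context: For a function $\xi(t,x)$, $\mathcal{L}\xi=\frac{\partial\xi}{\partial t}-\frac{x}{1-t}\frac{\partial\xi}{\partial x}+\frac12\frac{\partial^2\xi}{\partial x^2}$. $q>0$. $F_q(y):=\int_0^\infty u^{q-1}e^{yu-u^2/2}\,\mathrm{d}u$ and $G_q(y):=F_q(-y)$. $D^*>0$ is the unique positive root of $q-D(F_q+G_q)'(D)/(F_q+G_q)(D)=0$. $\overline{U}(t,x)=(1-t)^{q/2}(D^* )^q(F_q+G_q)(x/\sqrt{1-t})/(F_q+G_q)(D^* )$ if $|x|<D^*\sqrt{1-t}$, and $|x|^q$ otherwise. $h(t,x)=\overline{U}(t,x)-|x|^q$ if $|x|<D^*\sqrt{1-t}$, and $0$ otherwise. $w(A):=\frac{1}{G_q(A)}[(D^* )^q(F_q+G_q)(A)/(F_q+G_q)(D^* )-A^q]$ for $0\le A\le D^*$. $A^*$ is the unique maximizer of $w$ over $[0,D^*]$. *)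

From Stdlib Require Import Reals.
From Coquelicot Require Import Coquelicot.
Open Scope R_scope.

(* x^p for x >= 0, p > 0, with the convention 0^p = 0
   (Stdlib's Rpower 0 p = 1, so we guard it). *)
Definition rpow (x p : R) : R := if Rle_dec x 0 then 0 else Rpower x p.

Definition Fq (q y : R) : R :=
  RInt_gen (fun u => Rpower u (q - 1) * exp (y * u - u ^ 2 / 2))
           (at_right 0) (Rbar_locally p_infty).

Definition Gq (q y : R) : R := Fq q (- y).

Definition FG (q y : R) : R := Fq q y + Gq q y.

Definition Dstar_eq (q D : R) : Prop :=
  q - D * Derive (FG q) D / FG q D = 0.

Definition Ubar (q D t x : R) : R :=
  if Rlt_dec (Rabs x) (D * sqrt (1 - t)) then
    Rpower (1 - t) (q / 2) * Rpower D q * FG q (x / sqrt (1 - t)) / FG q D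
  else rpow (Rabs x) q.

Definition h (q D t x : R) : R :=
  if Rlt_dec (Rabs x) (D * sqrt (1 - t)) then Ubar q D t x - rpow (Rabs x) q
  else 0.

Definition w (q D A : R) : R :=
  / Gq q A * (Rpower D q * FG q A / FG q D - rpow A q).

Definition Wstar (q D A t x : R) : R :=
  if Rlt_dec (A * sqrt (1 - t)) (Rabs x) then
    Rpower (1 - t) (q / 2) * Gq q (Rabs x / sqrt (1 - t)) * w q D A
  else h q D t x.

Definition Lop (xi : R -> R -> R) (t x : R) : R :=
  Derive (fun s => xi s x) t
  - x / (1 - t) * Derive (fun y => xi t y) x
  + / 2 * Derive (fun y => Derive (fun z => xi t z) y) x.

Definition Lop_defined (xi : R -> R -> R) (t x : R) : Prop :=
  ex_derive (fun s => xi s x) t /\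
  ex_derive (fun y => xi t y) x /\
  ex_derive (fun y => Derive (fun z => xi t z) y) x.

From Stdlib Require Import Reals Lra.
From Coquelicot Require Import Coquelicot.
Open Scope R_scope.

(* F_q, hence G_q and F_q + G_q, solve K'' = z K' + q K: differentiating under the
   integral gives F_q' = F_(q+1), and integrating (u^q e^(y u - u^2/2))' by parts gives
   F_(q+2) = y F_(q+1) + q F_q.  This ODE is exactly the condition for
   (1 - t)^(q/2) K (x / sqrt (1 - t)) to be annihilated by L, which settles the outer
   region.  In the inner region W^* = (1 - t)^(q/2) c (F_q + G_q)(x / sqrt (1 - t)) - |x|^q,
   so L W^* = - L |x|^q, and L |x|^q = q |x|^(q-2) ((q - 1) (1 - t) - 2 x^2) / (2 (1 - t))
   is nonnegative as soon as 2 A^2 <= q - 1 for A = A^* > 0.  That is the second-order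
   condition at A: the function G_q (a) (w A - w a) = K a + a^q, with K a solution of the
   ODE, is nonnegative near the interior point A and vanishes there. *)

Lemma ball_Rabs (x y e : R) : ball x e y <-> Rabs (y - x) < e.
Proof. reflexivity. Qed.

Lemma locally_lt_continuous (f : R -> R) (t c : R) :
  continuous f t -> f t < c -> locally t (fun s => f s < c).
Proof. intros Hf Hlt. exact (Hf _ (open_lt c (f t) Hlt)). Qed.

Lemma locally_gt_continuous (f : R -> R) (t c : R) :
  continuous f t -> c < f t -> locally t (fun s => c < f s).
Proof. intros Hf Hlt. exact (Hf _ (open_gt c (f t) Hlt)). Qed.

Lemma filter_prod_interval (a0 b0 : R) : 0 < a0 ->
  filter_prod (at_right 0) (Rbar_locally p_infty)
    (fun ab => 0 < fst ab < a0 /\ b0 < snd ab).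
Proof.
  intros Ha0. apply Filter_prod with (Q := fun a => 0 < a < a0) (R := fun b => b0 < b).
  - exists (mkposreal a0 Ha0). intros y Hy Hy0. apply ball_Rabs in Hy.
    change (Rabs (y - 0) < a0) in Hy. rewrite Rminus_0_r in Hy.
    apply Rabs_def2 in Hy. lra.
  - exists b0. auto.
  - intros a b Ha Hb. simpl. auto.
Qed.

Section PositiveImproperIntegral.

Variable g : R -> R.
Hypothesis g_cont : forall u, 0 < u -> continuous g u.
Hypothesis g_pos : forall u, 0 < u -> 0 < g u.

Lemma ex_RInt_pos_interval (a b : R) : 0 < a -> 0 < b -> ex_RInt g a b.
Proof.
  intros Ha Hb. apply (@ex_RInt_continuous R_CompleteNormedModule).
  intros z [Hz _]. apply g_cont, Rlt_le_trans with (2 := Hz).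
  unfold Rmin; destruct Rle_dec; lra.
Qed.

Lemma RInt_pos_interval_ge0 (a b : R) : 0 < a <= b -> 0 <= RInt g a b.
Proof.
  intros Hab. apply RInt_ge_0; [lra | apply ex_RInt_pos_interval; lra |].
  intros x Hx. apply Rlt_le, g_pos. lra.
Qed.

Lemma RInt_pos_interval_mono (a a0 b0 b : R) :
  0 < a <= a0 -> a0 <= b0 <= b -> RInt g a0 b0 <= RInt g a b.
Proof.
  intros Ha Hb.
  rewrite <- (RInt_Chasles g a a0 b) by (apply ex_RInt_pos_interval; lra).
  rewrite <- (RInt_Chasles g a0 b0 b) by (apply ex_RInt_pos_interval; lra).
  assert (0 <= RInt g a a0) by (apply RInt_pos_interval_ge0; lra).
  assert (0 <= RInt g b0 b) by (apply RInt_pos_interval_ge0; lra).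
  unfold plus; simpl. lra.
Qed.

(* The improper integral is the supremum of the integrals over compact subintervals. *)
Lemma is_RInt_gen_pos_bounded (C : R) :
  (forall a b, 0 < a <= b -> RInt g a b <= C) ->
  exists L, is_RInt_gen g (at_right 0) (Rbar_locally p_infty) L /\ 0 < L.
Proof.
  intros HC.
  set (E := fun r => exists a b, 0 < a <= b /\ r = RInt g a b).
  assert (HEb : bound E) by (exists C; intros r (a & b & Hab & ->); apply HC, Hab).
  assert (HE12 : E (RInt g 1 2)) by (exists 1, 2; split; [lra | reflexivity]).
  destruct (completeness E HEb (ex_intro _ _ HE12)) as [L [HLub HLlub]].
  exists L. split.
  2:{ apply Rlt_le_trans with (2 := HLub _ HE12). apply RInt_gt_0; [lra | |].
      - intros x Hx. apply g_pos. lra.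
      - intros x Hx. apply g_cont. lra. }
  apply filterlimi_lim_ext_loc with (f := fun ab => RInt g (fst ab) (snd ab)).
  { apply filter_imp with (2 := filter_prod_interval 1 0 Rlt_0_1).
    intros [a b] Hab. simpl in Hab |- *.
    apply (@RInt_correct R_CompleteNormedModule), ex_RInt_pos_interval; lra. }
  intros P [eps HP].
  assert (Happrox : exists a0 b0, 0 < a0 <= b0 /\ L - eps < RInt g a0 b0).
  { apply Classical_Prop.NNPP. intros Hn.
    assert (Hub : is_upper_bound E (L - eps)).
    { intros r (a & b & Hab & ->). apply Rnot_lt_le. intros Hlt.
      apply Hn. exists a, b. auto. }
    specialize (HLlub _ Hub). destruct eps; simpl in *; lra. }
  destruct Happrox as (a0 & b0 & Hab0 & Hr).
  apply filter_imp with (2 := filter_prod_interval a0 b0 (proj1 Hab0)).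
  intros [a b] Hab. simpl in Hab |- *. apply HP, ball_Rabs.
  assert (RInt g a0 b0 <= RInt g a b) by (apply RInt_pos_interval_mono; lra).
  assert (RInt g a b <= L) by (apply HLub; exists a, b; split; [lra | reflexivity]).
  apply Rabs_def1; destruct eps; simpl in *; lra.
Qed.

End PositiveImproperIntegral.

Lemma Rpower_gt_0 (u p : R) : 0 < Rpower u p.
Proof. apply exp_pos. Qed.

Lemma Rpower_sub_1 (u p : R) : 0 < u -> Rpower u (p - 1) = Rpower u p / u.
Proof.
  intros Hu. unfold Rpower.
  replace ((p - 1) * ln u) with (p * ln u + - ln u) by ring.
  rewrite exp_plus, exp_Ropp, exp_ln by exact Hu. reflexivity.
Qed.

Lemma exp_le_exp (x y : R) : x <= y -> exp x <= exp y.
Proof. intros [Hlt | ->]; [left; apply exp_increasing, Hlt | lra]. Qed.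

Lemma ln_le_id (u : R) : 0 < u -> ln u <= u.
Proof. intros Hu. assert (H := exp_ineq1_le (ln u)). rewrite exp_ln in H; lra. Qed.

Lemma Rpower_le_exp (u p : R) : 0 <= p -> 0 < u -> Rpower u p <= exp (p * u).
Proof.
  intros Hp Hu. apply exp_le_exp, Rmult_le_compat_l; [lra | apply ln_le_id, Hu].
Qed.

Lemma rpow_Rpower (a q : R) : 0 < a -> rpow a q = Rpower a q.
Proof. intros Ha. unfold rpow. destruct Rle_dec; [lra | reflexivity]. Qed.

Definition Fq_integrand (p y u : R) : R := Rpower u (p - 1) * exp (y * u - u ^ 2 / 2).

Lemma Fq_integrand_pos (p y u : R) : 0 < u -> 0 < Fq_integrand p y u.
Proof. intros. apply Rmult_lt_0_compat; [apply Rpower_gt_0 | apply exp_pos]. Qed.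

Lemma continuous_Fq_integrand (p y u : R) : 0 < u -> continuous (Fq_integrand p y) u.
Proof.
  intros Hu. apply (ex_derive_continuous (K := R_AbsRing) (V := R_NormedModule)).
  unfold Fq_integrand, Rpower. auto_derive. lra.
Qed.

Lemma Fq_integrand_succ (p y u : R) :
  0 < u -> Fq_integrand (p + 1) y u = u * Fq_integrand p y u.
Proof.
  intros Hu. unfold Fq_integrand. replace (p + 1 - 1) with p by ring.
  rewrite (Rpower_sub_1 u p Hu). field. lra.
Qed.

Lemma Fq_integrand_shift (p y d u : R) :
  Fq_integrand p (y + d) u = Fq_integrand p y u * exp (d * u).
Proof. unfold Fq_integrand. rewrite Rmult_assoc, <- exp_plus. do 2 f_equal. ring. Qed.

Definition Fq_majorant (p u : R) : R := Rpower u (p - 1) / (1 + Rpower u p) ^ 2.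

Lemma is_derive_Fq_majorant_primitive (p u : R) : 0 < p -> 0 < u ->
  is_derive (fun v => - / (p * (1 + Rpower v p))) u (Fq_majorant p u).
Proof.
  intros Hp Hu. unfold Fq_majorant. rewrite Rpower_sub_1 by exact Hu.
  assert (H1 := Rpower_gt_0 u p). unfold Rpower in *. auto_derive.
  - split; [lra |]. split; [| exact I]. apply Rgt_not_eq, Rmult_lt_0_compat; lra.
  - field. split; lra.
Qed.

Lemma continuous_Fq_majorant (p u : R) : 0 < u -> continuous (Fq_majorant p) u.
Proof.
  intros Hu. apply (ex_derive_continuous (K := R_AbsRing) (V := R_NormedModule)).
  unfold Fq_majorant. assert (H1 := Rpower_gt_0 u p). unfold Rpower in *.
  auto_derive. repeat split; try lra. apply Rgt_not_eq. nra.
Qed.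

Lemma Fq_integrand_le_majorant (p y u : R) : 0 < p -> 0 < u ->
  Fq_integrand p y u <= 4 * exp ((y + 2 * p) ^ 2 / 2) * Fq_majorant p u.
Proof.
  intros Hp Hu. unfold Fq_integrand, Fq_majorant.
  assert (Hrp := Rpower_le_exp u p ltac:(lra) Hu).
  assert (H1 : 1 <= exp (p * u)) by (rewrite <- exp_0; apply exp_le_exp; nra).
  assert (HP := Rpower_gt_0 u p).
  assert (HQ := Rpower_gt_0 u (p - 1)).
  assert (Hsq : (1 + Rpower u p) ^ 2 <= 4 * exp (2 * p * u)).
  { replace (2 * p * u) with (p * u + p * u) by ring. rewrite exp_plus. nra. }
  (* completing the square: y u - u^2/2 + 2 p u <= (y + 2 p)^2 / 2 *)
  assert (Hgauss : exp (y * u - u ^ 2 / 2) * exp (2 * p * u) <= exp ((y + 2 * p) ^ 2 / 2)).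
  { rewrite <- exp_plus. apply exp_le_exp.
    assert (0 <= (u - (y + 2 * p)) ^ 2) by apply pow2_ge_0. nra. }
  assert (Hd : 0 < (1 + Rpower u p) ^ 2) by (apply pow_lt; lra).
  assert (0 < exp (y * u - u ^ 2 / 2)) by apply exp_pos.
  assert (0 < exp (2 * p * u)) by apply exp_pos.
  unfold Rdiv. rewrite <- Rmult_assoc, (Rmult_comm (4 * _)), Rmult_assoc.
  apply Rmult_le_compat_l; [lra |].
  apply Rmult_le_reg_r with ((1 + Rpower u p) ^ 2); [exact Hd |].
  rewrite Rmult_assoc, Rinv_l by lra. nra.
Qed.

Lemma RInt_Fq_integrand_le (p y a b : R) : 0 < p -> 0 < a <= b ->
  RInt (Fq_integrand p y) a b <= 4 * exp ((y + 2 * p) ^ 2 / 2) / p.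
Proof.
  intros Hp Hab.
  set (K := 4 * exp ((y + 2 * p) ^ 2 / 2)).
  assert (HK : 0 < K) by (assert (0 < exp ((y + 2 * p) ^ 2 / 2)) by apply exp_pos; unfold K; lra).
  set (M := fun v => - / (p * (1 + Rpower v p))).
  assert (Hpos : forall x, Rmin a b <= x <= Rmax a b -> 0 < x).
  { intros x [Hx _]. unfold Rmin in Hx. destruct Rle_dec; lra. }
  assert (HM : is_RInt (Fq_majorant p) a b (minus (M b) (M a))).
  { apply (@is_RInt_derive R_CompleteNormedModule).
    - intros x Hx. apply is_derive_Fq_majorant_primitive; auto.
    - intros x Hx. apply continuous_Fq_majorant; auto. }
  assert (HKM : is_RInt (fun u => K * Fq_majorant p u) a b (scal K (minus (M b) (M a))))
    by exact (is_RInt_scal (V := R_NormedModule) _ _ _ K _ HM).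
  apply Rle_trans with (RInt (fun u => K * Fq_majorant p u) a b).
  - apply RInt_le; [lra | | eexists; exact HKM |].
    + apply (@ex_RInt_continuous R_CompleteNormedModule).
      intros z Hz. apply continuous_Fq_integrand; auto.
    + intros x Hx. apply Fq_integrand_le_majorant; lra.
  - rewrite (is_RInt_unique _ _ _ _ HKM).
    unfold scal, minus, plus, opp, M; simpl; unfold mult; simpl.
    assert (HPa := Rpower_gt_0 a p). assert (HPb := Rpower_gt_0 b p).
    assert (0 < / (p * (1 + Rpower b p))) by (apply Rinv_0_lt_compat; nra).
    assert (/ (p * (1 + Rpower a p)) <= / p) by (apply Rinv_le_contravar; nra).
    unfold Rdiv. nra.
Qed.

Lemma Fq_spec (p y : R) : 0 < p ->
  is_RInt_gen (Fq_integrand p y) (at_right 0) (Rbar_locally p_infty) (Fq p y) /\ 0 < Fq p y.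
Proof.
  intros Hp.
  destruct (is_RInt_gen_pos_bounded (Fq_integrand p y) (continuous_Fq_integrand p y)
              (Fq_integrand_pos p y) (4 * exp ((y + 2 * p) ^ 2 / 2) / p)
              (fun a b Hab => RInt_Fq_integrand_le p y a b Hp Hab)) as [L [HL HLpos]].
  replace (Fq p y) with L; [auto |].
  symmetry. apply (is_RInt_gen_unique (V := R_CompleteNormedModule) (Fq_integrand p y)), HL.
Qed.

Lemma is_RInt_gen_Fq (p y : R) : 0 < p ->
  is_RInt_gen (Fq_integrand p y) (at_right 0) (Rbar_locally p_infty) (Fq p y).
Proof. intros Hp. apply (Fq_spec p y Hp). Qed.

Lemma Fq_pos (p y : R) : 0 < p -> 0 < Fq p y.
Proof. intros Hp. apply (Fq_spec p y Hp). Qed.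

Lemma Rabs_exp_sub_1_le (z : R) : Rabs (exp z - 1) <= Rabs z * exp (Rabs z).
Proof.
  destruct (MVT_gen exp 0 z exp) as [c [Hc Heq]].
  - intros x _. apply is_derive_Reals, derivable_pt_lim_exp.
  - intros x _. apply derivable_continuous_pt, derivable_pt_exp.
  - rewrite exp_0 in Heq. rewrite Heq, Rminus_0_r, Rabs_mult.
    rewrite (Rabs_right (exp c)) by (left; apply exp_pos).
    rewrite Rmult_comm. apply Rmult_le_compat_l; [apply Rabs_pos |].
    apply exp_le_exp. unfold Rmin, Rmax in Hc.
    destruct Rle_dec; unfold Rabs; destruct Rcase_abs; lra.
Qed.

Lemma Rabs_exp_sub_1_sub_le (z : R) : Rabs (exp z - 1 - z) <= z ^ 2 * exp (Rabs z).
Proof.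
  destruct (MVT_gen (fun x => exp x - 1 - x) 0 z (fun x => exp x - 1)) as [c [Hc Heq]].
  - intros x _. auto_derive; auto. ring.
  - intros x _. apply continuity_pt_filterlim.
    change (continuous (fun v => exp v - 1 - v) x).
    apply (ex_derive_continuous (K := R_AbsRing) (V := R_NormedModule)).
    auto_derive. exact I.
  - replace (exp z - 1 - z) with ((exp z - 1 - z) - (exp 0 - 1 - 0)) by (rewrite exp_0; ring).
    rewrite Heq, Rminus_0_r, Rabs_mult.
    assert (Hcz : Rabs c <= Rabs z).
    { unfold Rmin, Rmax in Hc. destruct Rle_dec;
      unfold Rabs; destruct Rcase_abs; destruct Rcase_abs; lra. }
    assert (Hexp : exp (Rabs c) <= exp (Rabs z)) by (apply exp_le_exp, Hcz).
    assert (Hc1 := Rabs_exp_sub_1_le c).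
    assert (0 <= Rabs c) by apply Rabs_pos.
    assert (0 <= Rabs z) by apply Rabs_pos.
    assert (0 < exp (Rabs c)) by apply exp_pos.
    replace (z ^ 2) with (Rabs z * Rabs z) by (rewrite <- Rabs_mult, Rabs_right; nra).
    apply Rle_trans with (Rabs c * exp (Rabs c) * Rabs z).
    + apply Rmult_le_compat_r; [apply Rabs_pos | exact Hc1].
    + replace (Rabs z * Rabs z * exp (Rabs z)) with (Rabs z * exp (Rabs z) * Rabs z) by ring.
      apply Rmult_le_compat_r; [lra |]. apply Rmult_le_compat; lra.
Qed.

Lemma Fq_integrand_taylor1_le (p y d u : R) : 0 < u -> Rabs d <= 1 ->
  Rabs (Fq_integrand p (y + d) u - Fq_integrand p y u - d * Fq_integrand (p + 1) y u)
  <= d ^ 2 * Fq_integrand (p + 2) (y + 1) u.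
Proof.
  intros Hu Hd.
  replace (Fq_integrand p (y + d) u - Fq_integrand p y u - d * Fq_integrand (p + 1) y u)
    with (Fq_integrand p y u * (exp (d * u) - 1 - d * u))
    by (rewrite Fq_integrand_shift, Fq_integrand_succ by exact Hu; ring).
  replace (p + 2) with (p + 1 + 1) by ring.
  rewrite !Fq_integrand_succ, Fq_integrand_shift by exact Hu.
  rewrite Rabs_mult, (Rabs_right (Fq_integrand p y u)) by (left; apply Fq_integrand_pos, Hu).
  assert (Hg := Fq_integrand_pos p y u Hu).
  assert (Hb := Rabs_exp_sub_1_sub_le (d * u)).
  assert (He : exp (Rabs (d * u)) <= exp (1 * u)).
  { apply exp_le_exp. rewrite Rabs_mult, (Rabs_right u) by lra.
    apply Rmult_le_compat_r; lra. }
  assert (0 <= (d * u) ^ 2) by apply pow2_ge_0.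
  apply Rle_trans with (Fq_integrand p y u * ((d * u) ^ 2 * exp (Rabs (d * u)))).
  - apply Rmult_le_compat_l; lra.
  - replace (d ^ 2 * (u * (u * (Fq_integrand p y u * exp (1 * u)))))
      with (Fq_integrand p y u * ((d * u) ^ 2 * exp (1 * u))) by ring.
    apply Rmult_le_compat_l; [lra |]. apply Rmult_le_compat_l; lra.
Qed.

Lemma Fq_taylor1_le (p y d : R) : 0 < p -> Rabs d <= 1 ->
  Rabs (Fq p (y + d) - Fq p y - d * Fq (p + 1) y) <= d ^ 2 * Fq (p + 2) (y + 1).
Proof.
  intros Hp Hd.
  assert (H1 := is_RInt_gen_Fq p (y + d) Hp).
  assert (H2 := is_RInt_gen_Fq p y Hp).
  assert (H3 := is_RInt_gen_Fq (p + 1) y ltac:(lra)).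
  assert (H4 := is_RInt_gen_Fq (p + 2) (y + 1) ltac:(lra)).
  refine (RInt_gen_norm (V := R_CompleteNormedModule) _ _ _ _ _ _
            (is_RInt_gen_minus _ _ _ _ (is_RInt_gen_minus _ _ _ _ H1 H2)
               (is_RInt_gen_scal _ d _ H3))
            (is_RInt_gen_scal _ (d ^ 2) _ H4)).
  - apply filter_imp with (2 := filter_prod_interval 1 1 Rlt_0_1).
    intros [a b] Hab. simpl in *. lra.
  - apply filter_imp with (2 := filter_prod_interval 1 1 Rlt_0_1).
    intros [a b] Hab x Hx. simpl in Hab, Hx |- *.
    apply Fq_integrand_taylor1_le; lra.
Qed.

Lemma is_derive_Fq (p y : R) : 0 < p -> is_derive (Fq p) y (Fq (p + 1) y).
Proof.
  intros Hp. apply is_derive_Reals. intros eps Heps.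
  set (K := Fq (p + 2) (y + 1)).
  assert (HK : 0 < K) by (apply Fq_pos; lra).
  assert (Hd : 0 < Rmin 1 (eps / (K + 1))) by (apply Rmin_pos; [lra | apply Rdiv_lt_0_compat; lra]).
  exists (mkposreal _ Hd). intros d Hd0 Hdlt. simpl in Hdlt.
  assert (Hd1 : Rabs d <= 1) by (apply Rlt_le, Rlt_le_trans with (1 := Hdlt), Rmin_l).
  assert (Hd2 : Rabs d < eps / (K + 1)) by (apply Rlt_le_trans with (1 := Hdlt), Rmin_r).
  assert (Hrem := Fq_taylor1_le p y d Hp Hd1). fold K in Hrem.
  assert (Ha : 0 < Rabs d) by (apply Rabs_pos_lt, Hd0).
  replace ((Fq p (y + d) - Fq p y) / d - Fq (p + 1) y)
    with ((Fq p (y + d) - Fq p y - d * Fq (p + 1) y) / d) by (field; exact Hd0).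
  unfold Rdiv. rewrite Rabs_mult, Rabs_inv.
  apply Rmult_lt_reg_r with (Rabs d); [exact Ha |].
  rewrite Rmult_assoc, Rinv_l, Rmult_1_r by lra.
  apply Rle_lt_trans with (1 := Hrem).
  replace (d ^ 2) with (Rabs d * Rabs d) by (rewrite <- Rabs_mult, Rabs_right; nra).
  assert (Rabs d * (K + 1) < eps).
  { apply Rmult_lt_reg_r with (/ (K + 1)); [apply Rinv_0_lt_compat; lra |].
    rewrite Rmult_assoc, Rinv_r by lra. lra. }
  nra.
Qed.

Lemma filterlim_locally_0 (f : R -> R) (F : (R -> Prop) -> Prop) {FF : Filter F} :
  (forall eps, 0 < eps -> F (fun u => Rabs (f u) < eps)) -> filterlim f F (locally 0).
Proof.
  intros Hf P [eps HP]. apply filter_imp with (2 := Hf eps (cond_pos eps)).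
  intros u Hu. apply HP, ball_Rabs. rewrite Rminus_0_r. exact Hu.
Qed.

(* Integrating the derivative of this boundary term over (0, oo) gives the recurrence of [Fq]. *)
Definition Fq_boundary (p y u : R) : R := Rpower u p * exp (y * u - u ^ 2 / 2).

Lemma Fq_boundary_pos (p y u : R) : 0 < Fq_boundary p y u.
Proof. apply Rmult_lt_0_compat; [apply Rpower_gt_0 | apply exp_pos]. Qed.

Lemma is_derive_Fq_boundary (p y u : R) : 0 < u ->
  is_derive (Fq_boundary p y) u
    (p * Fq_integrand p y u + y * Fq_integrand (p + 1) y u - Fq_integrand (p + 2) y u).
Proof.
  intros Hu. replace (p + 2) with (p + 1 + 1) by ring.
  rewrite !Fq_integrand_succ by exact Hu.
  unfold Fq_boundary, Fq_integrand. rewrite (Rpower_sub_1 u p Hu).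
  unfold Rpower. auto_derive; [lra |].
  replace (y * u + - (u * (u * 1) * / 2)) with (y * u - u ^ 2 / 2) by field. field. lra.
Qed.

Lemma Fq_boundary_lim_0 (p y : R) : 0 < p ->
  filterlim (Fq_boundary p y) (at_right 0) (locally 0).
Proof.
  intros Hp. apply filterlim_locally_0; [apply at_right_proper_filter |]. intros eps Heps.
  set (C := exp (Rabs y)).
  assert (HC : 0 < C) by apply exp_pos.
  set (r := Rpower (eps / C) (/ p)).
  assert (Hr : 0 < r) by apply Rpower_gt_0.
  exists (mkposreal (Rmin r 1) (Rmin_pos _ _ Hr Rlt_0_1)). intros u Hu Hu0.
  apply ball_Rabs in Hu. change (Rabs (u - 0) < Rmin r 1) in Hu.
  rewrite Rminus_0_r, Rabs_right in Hu by lra.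
  assert (Hur : u < r) by (apply Rlt_le_trans with (1 := Hu), Rmin_l).
  assert (Hu1 : u < 1) by (apply Rlt_le_trans with (1 := Hu), Rmin_r).
  rewrite Rabs_right by (apply Rle_ge, Rlt_le, Fq_boundary_pos).
  assert (Hpow : Rpower u p < eps / C).
  { replace (eps / C) with (Rpower r p).
    - apply Rlt_Rpower_l; lra.
    - unfold r. rewrite Rpower_mult. replace (/ p * p) with 1 by (field; lra).
      apply Rpower_1, Rdiv_lt_0_compat; lra. }
  assert (Hexp : exp (y * u - u ^ 2 / 2) <= C).
  { apply exp_le_exp.
    assert (y * u <= Rabs y).
    { apply Rle_trans with (Rabs (y * u)); [apply Rle_abs |].
      rewrite Rabs_mult, (Rabs_right u) by lra.
      assert (0 <= Rabs y) by apply Rabs_pos. nra. }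
    nra. }
  assert (HP := Rpower_gt_0 u p).
  unfold Fq_boundary. apply Rle_lt_trans with (Rpower u p * C).
  - apply Rmult_le_compat_l; lra.
  - apply Rmult_lt_reg_r with (/ C); [apply Rinv_0_lt_compat; lra |].
    rewrite Rmult_assoc, Rinv_r by lra. unfold Rdiv in Hpow. lra.
Qed.

Lemma Fq_boundary_lim_p_infty (p y : R) : 0 < p ->
  filterlim (Fq_boundary p y) (Rbar_locally p_infty) (locally 0).
Proof.
  intros Hp. apply filterlim_locally_0; [apply Rbar_locally_filter |]. intros eps Heps.
  set (c := p + y + 1). set (C := exp (c ^ 2 / 2)).
  assert (HC : 0 < C) by apply exp_pos.
  exists (Rmax 1 (- ln (eps / C))). intros u Hu.
  assert (Hu1 : 1 < u) by (apply Rle_lt_trans with (2 := Hu), Rmax_l).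
  assert (Hu2 : - ln (eps / C) < u) by (apply Rle_lt_trans with (2 := Hu), Rmax_r).
  rewrite Rabs_right by (apply Rle_ge, Rlt_le, Fq_boundary_pos).
  unfold Fq_boundary.
  apply Rle_lt_trans with (exp (p * u) * exp (y * u - u ^ 2 / 2)).
  { apply Rmult_le_compat_r; [left; apply exp_pos | apply Rpower_le_exp; lra]. }
  rewrite <- exp_plus.
  (* p u + y u - u^2/2 <= c^2/2 - u with c = p + y + 1 *)
  apply Rle_lt_trans with (exp (c ^ 2 / 2 + - u)).
  { apply exp_le_exp. assert (0 <= (u - c) ^ 2) by apply pow2_ge_0. unfold c in *. nra. }
  rewrite exp_plus. fold C.
  assert (exp (- u) < eps / C).
  { rewrite <- (exp_ln (eps / C)) by (apply Rdiv_lt_0_compat; lra).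
    apply exp_increasing. lra. }
  apply Rmult_lt_reg_r with (/ C); [apply Rinv_0_lt_compat; lra |].
  replace (C * exp (- u) * / C) with (exp (- u)) by (field; lra). exact H.
Qed.

Lemma Fq_recurrence (p y : R) : 0 < p -> Fq (p + 2) y = y * Fq (p + 1) y + p * Fq p y.
Proof.
  intros Hp.
  set (dB := fun u => p * Fq_integrand p y u + y * Fq_integrand (p + 1) y u
                      - Fq_integrand (p + 2) y u).
  assert (Hpos : filter_prod (at_right 0) (Rbar_locally p_infty)
    (fun ab => forall x, Rmin (fst ab) (snd ab) <= x <= Rmax (fst ab) (snd ab) -> 0 < x)).
  { apply filter_imp with (2 := filter_prod_interval 1 1 Rlt_0_1).
    intros [a b] Hab x [Hx _]. simpl in *. unfold Rmin in Hx. destruct Rle_dec; lra. }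
  assert (Hzero : is_RInt_gen dB (at_right 0) (Rbar_locally p_infty) (0 - 0)).
  { apply is_RInt_gen_ext with (f := Derive (Fq_boundary p y)).
    { apply filter_imp with (2 := Hpos). intros ab H x Hx.
      apply is_derive_unique, is_derive_Fq_boundary, H. lra. }
    apply is_RInt_gen_Derive.
    - apply filter_imp with (2 := Hpos). intros ab H x Hx.
      eexists. apply is_derive_Fq_boundary, H, Hx.
    - apply filter_imp with (2 := Hpos). intros ab H x Hx.
      assert (Hx0 := H x Hx).
      apply continuous_ext_loc with (g := dB).
      + apply filter_imp with (2 := open_gt 0 x Hx0). intros z Hz.
        symmetry. apply is_derive_unique, is_derive_Fq_boundary, Hz.
      + apply (ex_derive_continuous (K := R_AbsRing) (V := R_NormedModule)).
        unfold dB, Fq_integrand, Rpower. auto_derive. repeat split; lra.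
    - apply Fq_boundary_lim_0, Hp.
    - apply Fq_boundary_lim_p_infty, Hp. }
  assert (Hsum : is_RInt_gen dB (at_right 0) (Rbar_locally p_infty)
                   (p * Fq p y + y * Fq (p + 1) y - Fq (p + 2) y)).
  { assert (H0 := is_RInt_gen_Fq p y Hp).
    assert (H1 := is_RInt_gen_Fq (p + 1) y ltac:(lra)).
    assert (H2 := is_RInt_gen_Fq (p + 2) y ltac:(lra)).
    exact (is_RInt_gen_minus _ _ _ _
             (is_RInt_gen_plus _ _ _ _ (is_RInt_gen_scal _ p _ H0) (is_RInt_gen_scal _ y _ H1)) H2). }
  rewrite Rminus_0_r in Hzero.
  assert (E := is_RInt_gen_unique (V := R_CompleteNormedModule) _ _ Hzero).
  rewrite (is_RInt_gen_unique (V := R_CompleteNormedModule) _ _ Hsum) in E. lra.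
Qed.

Definition parabolic_ode (q : R) (K K1 K2 : R -> R) : Prop :=
  (forall z, is_derive K z (K1 z)) /\ (forall z, is_derive K1 z (K2 z)) /\
  (forall z, K2 z = z * K1 z + q * K z).

Lemma Fq_parabolic_ode (q : R) : 0 < q -> parabolic_ode q (Fq q) (Fq (q + 1)) (Fq (q + 2)).
Proof.
  intros hq. split; [| split].
  - intros z. apply is_derive_Fq, hq.
  - intros z. replace (q + 2) with (q + 1 + 1) by ring. apply is_derive_Fq. lra.
  - intros z. apply Fq_recurrence, hq.
Qed.

Lemma parabolic_ode_reflect (q : R) (K K1 K2 : R -> R) : parabolic_ode q K K1 K2 ->
  parabolic_ode q (fun z => K (- z)) (fun z => - K1 (- z)) (fun z => K2 (- z)).
Proof.
  intros (HK & HK1 & Hode). split; [| split].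
  - intros z. auto_derive.
    + exists (K1 (- z)). apply HK.
    + rewrite (is_derive_unique _ _ _ (HK _)). ring.
  - intros z. auto_derive.
    + exists (K2 (- z)). apply HK1.
    + rewrite (is_derive_unique _ _ _ (HK1 _)). ring.
  - intros z. rewrite Hode. ring.
Qed.

Lemma parabolic_ode_plus (q : R) (K K1 K2 L L1 L2 : R -> R) :
  parabolic_ode q K K1 K2 -> parabolic_ode q L L1 L2 ->
  parabolic_ode q (fun z => K z + L z) (fun z => K1 z + L1 z) (fun z => K2 z + L2 z).
Proof.
  intros (HK & HK1 & HKode) (HL & HL1 & HLode). split; [| split].
  - intros z. apply (is_derive_plus K L); auto.
  - intros z. apply (is_derive_plus K1 L1); auto.
  - intros z. rewrite HKode, HLode. ring.
Qed.

Lemma parabolic_ode_scal (q c : R) (K K1 K2 : R -> R) : parabolic_ode q K K1 K2 ->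
  parabolic_ode q (fun z => c * K z) (fun z => c * K1 z) (fun z => c * K2 z).
Proof.
  intros (HK & HK1 & Hode). split; [| split].
  - intros z. apply (is_derive_scal K); auto.
  - intros z. apply (is_derive_scal K1); auto.
  - intros z. rewrite Hode. ring.
Qed.

Lemma Gq_parabolic_ode (q : R) : 0 < q ->
  parabolic_ode q (Gq q) (fun z => - Fq (q + 1) (- z)) (fun z => Fq (q + 2) (- z)).
Proof. intros hq. apply (parabolic_ode_reflect q (Fq q)), Fq_parabolic_ode, hq. Qed.

Lemma FG_parabolic_ode (q : R) : 0 < q ->
  parabolic_ode q (FG q) (fun z => Fq (q + 1) z + - Fq (q + 1) (- z))
    (fun z => Fq (q + 2) z + Fq (q + 2) (- z)).
Proof.
  intros hq. apply (parabolic_ode_plus q (Fq q) _ _ (Gq q)).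
  - apply Fq_parabolic_ode, hq.
  - apply Gq_parabolic_ode, hq.
Qed.

Lemma Gq_pos (q z : R) : 0 < q -> 0 < Gq q z.
Proof. intros hq. apply Fq_pos, hq. Qed.

Lemma FG_pos (q z : R) : 0 < q -> 0 < FG q z.
Proof.
  intros hq. unfold FG. assert (0 < Fq q z) by (apply Fq_pos, hq).
  assert (0 < Gq q z) by (apply Gq_pos, hq). lra.
Qed.

Lemma is_derive_neg_right (g : R -> R) (x l : R) : is_derive g x l -> l < 0 ->
  exists d, 0 < d /\ forall h, 0 < h < d -> g (x + h) < g x.
Proof.
  intros Hg Hl. apply is_derive_Reals in Hg.
  destruct (Hg (- l / 2) ltac:(lra)) as [d Hd].
  exists d. split; [apply cond_pos |]. intros h Hh.
  assert (Hq := Hd h ltac:(lra) ltac:(rewrite Rabs_right; lra)).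
  apply Rabs_def2 in Hq. destruct Hq as [Hq _].
  assert (Hslope : (g (x + h) - g x) / h < 0) by lra.
  assert (Hinv : 0 < / h) by (apply Rinv_0_lt_compat; lra).
  apply Rmult_lt_compat_r with (r := h) in Hslope; [| lra].
  unfold Rdiv in Hslope. rewrite Rmult_assoc, Rinv_l, Rmult_0_l in Hslope by lra. lra.
Qed.

Lemma local_min_derive (f f1 : R -> R) (x0 r l : R) : 0 < r ->
  (forall x, Rabs (x - x0) < r -> f x0 <= f x) ->
  (forall x, Rabs (x - x0) < r -> is_derive f x (f1 x)) ->
  is_derive f1 x0 l -> f1 x0 = 0 /\ 0 <= l.
Proof.
  intros Hr Hmin Hf Hf1.
  assert (Hball : forall x, x0 <= x < x0 + r -> Rabs (x - x0) < r)
    by (intros x Hx; rewrite Rabs_right; lra).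
  assert (Hcrit : f1 x0 = 0).
  { assert (Hd := proj1 (is_derive_Reals _ _ _) (Hf x0 ltac:(rewrite Rminus_diag_eq, Rabs_R0; lra))).
    change (derive_pt f x0 (exist _ (f1 x0) Hd) = 0).
    apply (deriv_minimum f (x0 - r) (x0 + r)); try lra.
    intros x Hx1 Hx2. apply Hmin. apply Rabs_def1; lra. }
  split; [exact Hcrit |]. apply Rnot_lt_le. intros Hl.
  destruct (is_derive_neg_right f1 x0 l Hf1 Hl) as [d [Hd Hneg]].
  set (h := Rmin d r / 2).
  assert (Hh : 0 < h < d /\ h < r).
  { assert (0 < Rmin d r) by (apply Rmin_pos; lra).
    assert (Rmin d r <= d) by apply Rmin_l. assert (Rmin d r <= r) by apply Rmin_r.
    unfold h. lra. }
  destruct (MVT_cor2 f f1 x0 (x0 + h) ltac:(lra)) as [c [Hmvt Hc]].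
  { intros c Hc. apply is_derive_Reals, Hf, Hball. lra. }
  assert (Hf1c : f1 c < 0).
  { replace c with (x0 + (c - x0)) by ring. rewrite <- Hcrit. apply Hneg. lra. }
  assert (f x0 <= f (x0 + h)) by (apply Hmin, Hball; lra).
  assert (f1 c * (x0 + h - x0) < 0) by (apply Rmult_neg_pos; lra).
  lra.
Qed.

Lemma is_derive_Rpower_sgn (q s a : R) : 0 < s * a ->
  is_derive (fun v => Rpower (s * v) q) a (q * Rpower (s * a) q / a).
Proof.
  intros Ha. assert (a <> 0) by (intros ->; lra). assert (s <> 0) by (intros ->; lra).
  unfold Rpower. auto_derive; [exact Ha |]. field. auto.
Qed.

Lemma is_derive_Rpower_sgn_div (q s a : R) : 0 < s * a ->
  is_derive (fun v => q * Rpower (s * v) q / v) a (q * (q - 1) * Rpower (s * a) q / (a * a)).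
Proof.
  intros Ha. assert (a <> 0) by (intros ->; lra). assert (s <> 0) by (intros ->; lra).
  unfold Rpower. auto_derive; [repeat split; auto; lra |]. field. auto.
Qed.

(* If [K + a^q] touches 0 from above at [A], then the second-order condition, simplified
   with the ODE, reads [q A^(q-2) (q - 1 - 2 A^2) >= 0]. *)
Lemma parabolic_ode_touching_power (q A r : R) (K K1 K2 : R -> R) :
  0 < q -> 0 < r <= A -> parabolic_ode q K K1 K2 ->
  (forall a, Rabs (a - A) < r -> 0 <= K a + Rpower a q) -> K A + Rpower A q = 0 ->
  2 * (A * A) <= q - 1.
Proof.
  intros hq Hr (HK & HK1 & Hode) Hge HA0.
  assert (Hpos : forall a, Rabs (a - A) < r -> 0 < 1 * a)
    by (intros a Ha; apply Rabs_def2 in Ha; lra).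
  destruct (local_min_derive (fun a => K a + Rpower (1 * a) q)
              (fun a => K1 a + q * Rpower (1 * a) q / a) A r
              (K2 A + q * (q - 1) * Rpower (1 * A) q / (A * A))) as [Hcrit Hconv].
  - lra.
  - intros a Ha. rewrite !Rmult_1_l. rewrite HA0. apply Hge, Ha.
  - intros a Ha. apply (is_derive_plus K); [apply HK | apply is_derive_Rpower_sgn, Hpos, Ha].
  - apply (is_derive_plus K1); [apply HK1 | apply is_derive_Rpower_sgn_div; lra].
  - rewrite !Rmult_1_l in Hcrit, Hconv. rewrite Hode in Hconv.
    assert (HR := Rpower_gt_0 A q).
    assert (HAA : 0 < A * A) by nra.
    replace (A * K1 A + q * K A + q * (q - 1) * Rpower A q / (A * A))
      with (A * (K1 A + q * Rpower A q / A) + q * (K A + Rpower A q)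
            + q * Rpower A q * ((q - 1) / (A * A) - 2)) in Hconv by (field; lra).
    rewrite Hcrit, HA0 in Hconv.
    assert (Hfac : 0 <= (q - 1) / (A * A) - 2).
    { apply Rmult_le_reg_l with (q * Rpower A q); nra. }
    apply Rmult_le_compat_r with (r := A * A) in Hfac; [| lra].
    replace (((q - 1) / (A * A) - 2) * (A * A)) with (q - 1 - 2 * (A * A)) in Hfac
      by (field; lra).
    lra.
Qed.

Section ArgmaxW.

Variables q D : R.
Hypothesis hq : 0 < q.
Hypothesis hD : 0 < D.

Lemma Gq_mul_w (a : R) : 0 < a ->
  Gq q a * w q D a = Rpower D q / FG q D * FG q a - Rpower a q.
Proof.
  intros Ha. unfold w. rewrite rpow_Rpower by exact Ha.
  assert (0 < Gq q a) by (apply Gq_pos, hq).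
  assert (0 < FG q D) by (apply FG_pos, hq).
  field. lra.
Qed.

Lemma w_D : w q D D = 0.
Proof.
  unfold w. rewrite rpow_Rpower by exact hD.
  assert (0 < FG q D) by (apply FG_pos, hq).
  replace (Rpower D q * FG q D / FG q D) with (Rpower D q) by (field; lra).
  rewrite Rminus_diag_eq by reflexivity. apply Rmult_0_r.
Qed.

Lemma w_0_pos : 0 < w q D 0.
Proof.
  unfold w, rpow. destruct Rle_dec; [| lra]. rewrite Rminus_0_r.
  assert (0 < Gq q 0) by (apply Gq_pos, hq).
  assert (0 < FG q 0) by (apply FG_pos, hq).
  assert (0 < FG q D) by (apply FG_pos, hq).
  assert (0 < Rpower D q) by apply Rpower_gt_0.
  apply Rmult_lt_0_compat; [apply Rinv_0_lt_compat; lra |].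
  apply Rdiv_lt_0_compat; [apply Rmult_lt_0_compat |]; lra.
Qed.

Variable A : R.
Hypothesis hA : 0 <= A <= D.
Hypothesis hAmax : forall a, 0 <= a <= D -> w q D a <= w q D A.

Lemma argmax_w_lt_D : A < D.
Proof.
  destruct (Rle_lt_or_eq_dec _ _ (proj2 hA)) as [HAD | HAD]; [exact HAD |].
  assert (H0 := hAmax 0 ltac:(lra)). rewrite HAD, w_D in H0.
  assert (H := w_0_pos). lra.
Qed.

Lemma argmax_w_second_order : 0 < A -> 2 * (A * A) <= q - 1.
Proof.
  intros HA.
  set (c := Rpower D q / FG q D).
  assert (HAD := argmax_w_lt_D).
  assert (Hgap : forall a, 0 < a -> w q D A * Gq q a + - c * FG q a + Rpower a q
                                    = Gq q a * (w q D A - w q D a)).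
  { intros a Ha. rewrite Rmult_minus_distr_l, Gq_mul_w by exact Ha. unfold c. ring. }
  eapply (parabolic_ode_touching_power q A (Rmin A (D - A))
           (fun z => w q D A * Gq q z + - c * FG q z) _ _ hq).
  - split; [apply Rmin_pos; lra | apply Rmin_l].
  - exact (parabolic_ode_plus _ _ _ _ _ _ _
             (parabolic_ode_scal q (w q D A) _ _ _ (Gq_parabolic_ode q hq))
             (parabolic_ode_scal q (- c) _ _ _ (FG_parabolic_ode q hq))).
  - intros a Ha. apply Rabs_def2 in Ha.
    assert (Rmin A (D - A) <= A) by apply Rmin_l.
    assert (Rmin A (D - A) <= D - A) by apply Rmin_r.
    rewrite Hgap by lra. apply Rmult_le_pos.
    + apply Rlt_le, Gq_pos, hq.
    + assert (w q D a <= w q D A) by (apply hAmax; lra). lra.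
  - rewrite Hgap by exact HA. rewrite Rminus_diag_eq by reflexivity. apply Rmult_0_r.
Qed.

End ArgmaxW.

Definition Lop_data (V : R -> R -> R) (t x dt : R) (Vy : R -> R) (dyy : R) : Prop :=
  is_derive (fun s => V s x) t dt /\
  locally x (fun y => is_derive (fun z => V t z) y (Vy y)) /\
  is_derive Vy x dyy.

Lemma Lop_ext_loc (W V : R -> R -> R) (t x dt dyy : R) (Vy : R -> R) :
  Lop_data V t x dt Vy dyy ->
  locally t (fun s => W s x = V s x) ->
  locally x (fun y => W t y = V t y) ->
  Lop_defined W t x /\ Lop W t x = dt - x / (1 - t) * Vy x + / 2 * dyy.
Proof.
  intros (HVt & HVy & HVyy) HWt HWx.
  assert (Dt : is_derive (fun s => W s x) t dt).
  { apply is_derive_ext_loc with (2 := HVt).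
    apply filter_imp with (2 := HWt). intros s Hs. symmetry. exact Hs. }
  assert (Dy : locally x (fun y => is_derive (fun z => W t z) y (Vy y))).
  { apply filter_imp with (2 := filter_and _ _ (locally_locally _ _ HWx) HVy).
    intros y [Hy1 Hy2]. apply is_derive_ext_loc with (2 := Hy2).
    apply filter_imp with (2 := Hy1). intros z Hz. symmetry. exact Hz. }
  assert (Dyy : is_derive (fun y => Derive (fun z => W t z) y) x dyy).
  { apply is_derive_ext_loc with (2 := HVyy).
    apply filter_imp with (2 := Dy). intros y Hy. symmetry. apply is_derive_unique, Hy. }
  assert (Dx := locally_singleton _ _ Dy).
  split.
  - split; [eexists; exact Dt |]. split; eexists; [exact Dx | exact Dyy].
  - assert (E1 : Derive (fun s => W s x) t = dt) by (apply is_derive_unique, Dt).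
    assert (E2 : Derive (fun y => W t y) x = Vy x) by (apply is_derive_unique, Dx).
    assert (E3 : Derive (fun y => Derive (fun z => W t z) y) x = dyy)
      by (apply is_derive_unique, Dyy).
    unfold Lop. rewrite E1, E2, E3. reflexivity.
Qed.

Lemma Lop_data_minus (V1 V2 : R -> R -> R) (t x dt1 dt2 dyy1 dyy2 : R) (Vy1 Vy2 : R -> R) :
  Lop_data V1 t x dt1 Vy1 dyy1 -> Lop_data V2 t x dt2 Vy2 dyy2 ->
  Lop_data (fun s y => V1 s y - V2 s y) t x (dt1 - dt2) (fun y => Vy1 y - Vy2 y) (dyy1 - dyy2).
Proof.
  intros (H1t & H1y & H1yy) (H2t & H2y & H2yy). split; [| split].
  - apply (is_derive_minus (fun s => V1 s x) (fun s => V2 s x)); assumption.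
  - apply filter_imp with (2 := filter_and _ _ H1y H2y). intros y [Hy1 Hy2].
    apply (is_derive_minus (fun z => V1 t z) (fun z => V2 t z)); assumption.
  - apply (is_derive_minus Vy1 Vy2); assumption.
Qed.

Lemma Lop_data_self_similar (q c s t x : R) (K K1 K2 : R -> R) :
  t < 1 -> s * s = 1 -> parabolic_ode q K K1 K2 ->
  exists dt Vy dyy,
    Lop_data (fun r y => Rpower (1 - r) (q / 2) * K (s * y / sqrt (1 - r)) * c) t x dt Vy dyy
    /\ dt - x / (1 - t) * Vy x + / 2 * dyy = 0.
Proof.
  intros Ht Hs (HK & HK1 & Hode).
  set (E := Rpower (1 - t) (q / 2)).
  set (S := sqrt (1 - t)).
  assert (HS : 0 < S) by (apply sqrt_lt_R0; lra).
  assert (HS2 : S * S = 1 - t) by (apply sqrt_sqrt; lra).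
  set (z := s * x / S).
  exists ((q / 2 * (- 1 / (1 - t)) * E * K z + E * (s * x * (1 / (2 * S)) / (S * S)) * K1 z) * c).
  exists (fun y => E * K1 (s * y / S) * (s / S) * c).
  exists (E * K2 z * (s / S) * (s / S) * c).
  split; [split; [| split] |].
  - unfold E, Rpower. auto_derive.
    + change (1 + - t) with (1 - t). fold S.
      repeat split; try lra; try (eexists; apply HK); apply Rgt_not_eq; lra.
    + change (1 + - t) with (1 - t). fold S. rewrite (is_derive_unique _ _ _ (HK _)).
      change (s * x * / S) with z. field. lra.
  - apply filter_forall. intros y. unfold E, Rpower. auto_derive.
    + change (1 + - t) with (1 - t). fold S.
      repeat split; try lra; try (eexists; apply HK); apply Rgt_not_eq; lra.
    + change (1 + - t) with (1 - t). fold S. rewrite (is_derive_unique _ _ _ (HK _)).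
      change (s * y * / S) with (s * y / S). field. lra.
  - auto_derive.
    + repeat split; try lra; eexists; apply HK1.
    + rewrite (is_derive_unique _ _ _ (HK1 _)). change (s * x * / S) with z. field. lra.
  - rewrite Hode. unfold z. clearbody E S. rewrite <- HS2.
    transitivity (E * c * (s * x / S * K1 (s * x / S) + q * K (s * x / S)) * (s * s - 1)
                  / (2 * (S * S))).
    + field. lra.
    + rewrite Hs. field. lra.
Qed.

Lemma Lop_data_Rpower_sgn (q s t x : R) : 0 < s * x ->
  Lop_data (fun _ y => Rpower (s * y) q) t x 0
    (fun y => q * Rpower (s * y) q / y) (q * (q - 1) * Rpower (s * x) q / (x * x)).
Proof.
  intros Hx. split; [| split].
  - apply (is_derive_const (K := R_AbsRing) (V := R_NormedModule)).
  - assert (Hc : continuous (fun y => s * y) x).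
    { apply (ex_derive_continuous (K := R_AbsRing) (V := R_NormedModule)).
      auto_derive. exact I. }
    apply filter_imp with (2 := locally_gt_continuous _ x 0 Hc Hx).
    intros y Hy. apply is_derive_Rpower_sgn, Hy.
  - apply is_derive_Rpower_sgn_div, Hx.
Qed.

Definition sgn (x : R) : R := if Rle_dec 0 x then 1 else -1.

Lemma sgn_sqr (x : R) : sgn x * sgn x = 1.
Proof. unfold sgn. destruct Rle_dec; ring. Qed.

Lemma locally_Rabs_sgn (x : R) : x <> 0 -> locally x (fun y => Rabs y = sgn x * y).
Proof.
  intros Hx. unfold sgn. destruct Rle_dec as [Hle | Hlt].
  - apply filter_imp with (2 := open_gt 0 x ltac:(lra)).
    intros y Hy. rewrite Rabs_right; lra.
  - apply filter_imp with (2 := open_lt 0 x ltac:(lra)).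
    intros y Hy. rewrite Rabs_left; lra.
Qed.

Lemma continuous_scal_sqrt_1_sub (A t : R) : t < 1 -> continuous (fun s => A * sqrt (1 - s)) t.
Proof.
  intros Ht. apply (ex_derive_continuous (K := R_AbsRing) (V := R_NormedModule)).
  auto_derive. lra.
Qed.

Lemma Rpower_generator_nonneg (q P t x : R) :
  0 < q -> 0 < P -> t < 1 -> x <> 0 -> 2 * (x * x) <= (q - 1) * (1 - t) ->
  0 <= 0 - x / (1 - t) * (q * P / x) + / 2 * (q * (q - 1) * P / (x * x)).
Proof.
  intros hq HP Ht Hx Hxt.
  assert (Hxx : 0 < x * x) by (assert (H := Rsqr_pos_lt x Hx); exact H).
  replace (0 - x / (1 - t) * (q * P / x) + / 2 * (q * (q - 1) * P / (x * x)))
    with (q * P * ((q - 1) * (1 - t) - 2 * (x * x)) / (2 * (x * x) * (1 - t)))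
    by (field; split; lra).
  apply Rdiv_le_0_compat; [apply Rmult_le_pos; nra | nra].
Qed.

Lemma Lop_Wstar_outer (q D A t x : R) : 0 < q -> 0 <= A -> t < 1 ->
  A * sqrt (1 - t) < Rabs x ->
  Lop_defined (Wstar q D A) t x /\ Lop (Wstar q D A) t x = 0.
Proof.
  intros hq hA Ht Hx.
  assert (Hx0 : x <> 0).
  { intros ->. rewrite Rabs_R0 in Hx. assert (H := sqrt_pos (1 - t)). nra. }
  assert (Hsgn := locally_Rabs_sgn x Hx0).
  destruct (Lop_data_self_similar q (w q D A) (sgn x) t x (Gq q) _ _ Ht (sgn_sqr x)
              (Gq_parabolic_ode q hq)) as (dt & Vy & dyy & Hdata & HL0).
  destruct (Lop_ext_loc (Wstar q D A) _ t x dt dyy Vy Hdata) as [Hdef HL].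
  - apply filter_imp with
      (2 := locally_lt_continuous _ t (Rabs x) (continuous_scal_sqrt_1_sub A t Ht) Hx).
    intros s Hs. unfold Wstar. destruct Rlt_dec; [| contradiction].
    rewrite (locally_singleton _ _ Hsgn). reflexivity.
  - apply filter_imp with
      (2 := filter_and _ _ Hsgn (locally_gt_continuous _ x _ (continuous_Rabs x) Hx)).
    intros y [Hy Hyt]. unfold Wstar. destruct Rlt_dec; [| contradiction].
    rewrite Hy. reflexivity.
  - split; [exact Hdef | rewrite HL; exact HL0].
Qed.

Lemma Wstar_inner (q D A s y : R) : A <= D -> 0 < Rabs y < A * sqrt (1 - s) ->
  Wstar q D A s y = Rpower (1 - s) (q / 2) * FG q (1 * y / sqrt (1 - s))
                      * (Rpower D q / FG q D) - Rpower (Rabs y) q.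
Proof.
  intros HAD Hy. assert (HS := sqrt_pos (1 - s)).
  assert (Rabs y < D * sqrt (1 - s)) by nra.
  unfold Wstar, h, Ubar.
  destruct Rlt_dec; [lra |]. destruct Rlt_dec; [| contradiction].
  rewrite rpow_Rpower, Rmult_1_l by lra. unfold Rdiv. ring.
Qed.

Lemma Lop_Wstar_inner (q D A t x : R) : 0 < q -> A <= D -> 2 * (A * A) <= q - 1 -> t < 1 ->
  0 < Rabs x < A * sqrt (1 - t) ->
  Lop_defined (Wstar q D A) t x /\ Lop (Wstar q D A) t x <= 0.
Proof.
  intros hq HAD HA2 Ht Hx.
  assert (Hx0 : x <> 0) by (intros ->; rewrite Rabs_R0 in Hx; lra).
  assert (Hsgn := locally_Rabs_sgn x Hx0).
  assert (Hsx := locally_singleton _ _ Hsgn).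
  assert (Hxt : 2 * (x * x) <= (q - 1) * (1 - t)).
  { assert (HS := sqrt_pos (1 - t)). assert (HSS := sqrt_sqrt (1 - t) ltac:(lra)).
    replace (x * x) with (Rabs x * Rabs x) by (rewrite <- Rabs_mult; apply Rabs_right; nra).
    assert (Rabs x * Rabs x < A * sqrt (1 - t) * (A * sqrt (1 - t))) by nra. nra. }
  destruct (Lop_data_self_similar q (Rpower D q / FG q D) 1 t x (FG q) _ _ Ht ltac:(ring)
              (FG_parabolic_ode q hq)) as (dt & Vy & dyy & Hdata & HL0).
  destruct (Lop_ext_loc (Wstar q D A) _ t x _ _ _
              (Lop_data_minus _ _ _ _ _ _ _ _ _ _ Hdata
                 (Lop_data_Rpower_sgn q (sgn x) t x ltac:(lra)))) as [Hdef HL].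
  - apply filter_imp with
      (2 := locally_gt_continuous _ t (Rabs x) (continuous_scal_sqrt_1_sub A t Ht) (proj2 Hx)).
    intros s Hs. rewrite Wstar_inner, Hsx by lra. reflexivity.
  - apply filter_imp with (2 := filter_and _ _ Hsgn (filter_and _ _
      (locally_gt_continuous _ x _ (continuous_Rabs x) (proj1 Hx))
      (locally_lt_continuous _ x _ (continuous_Rabs x) (proj2 Hx)))).
    intros y (Hy & Hy0 & HyA). rewrite Wstar_inner, Hy by lra. reflexivity.
  - split; [exact Hdef |]. rewrite HL.
    assert (Hgen := Rpower_generator_nonneg q (Rpower (sgn x * x) q) t x hq
                      (Rpower_gt_0 _ _) Ht Hx0 Hxt).
    lra.
Qed.

Theorem lemma5p5 (q Dst Ast : R) (hq : 0 < q)
  (hD : 0 < Dst) (hDroot : Dstar_eq q Dst)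
  (hDuniq : forall D, 0 < D -> Dstar_eq q D -> D = Dst)
  (hA : 0 <= Ast <= Dst)
  (hAmax : forall a, 0 <= a <= Dst -> w q Dst a <= w q Dst Ast)
  (hAuniq : forall a, 0 <= a <= Dst ->
     (forall b, 0 <= b <= Dst -> w q Dst b <= w q Dst a) -> a = Ast) :
  (forall t x, 0 <= t < 1 -> Ast * sqrt (1 - t) < Rabs x ->
     Lop_defined (Wstar q Dst Ast) t x /\ Lop (Wstar q Dst Ast) t x = 0) /\
  (0 < Ast -> forall t x, 0 <= t < 1 -> 0 < Rabs x < Ast * sqrt (1 - t) ->
     Lop_defined (Wstar q Dst Ast) t x /\ Lop (Wstar q Dst Ast) t x <= 0).
Proof.
  split.
  - intros t x [_ Ht] Hx. apply Lop_Wstar_outer; [exact hq | apply hA | exact Ht | exact Hx].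
  - intros HA t x [_ Ht] Hx. apply Lop_Wstar_inner; [exact hq | apply hA | | exact Ht | exact Hx].
    exact (argmax_w_second_order q Dst hq hD Ast hA hAmax HA).
Qed.
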